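(* Let $(\overline M,\varphi,\xi,\eta,g)$ be an almost $(\epsilon)$-contact metric manifold, $k\ge1$, $M$ as in the context, and $D=\bigoplus_{i=0}^kD_i$ a $k$-slant distribution on $M$ (with invariant component $D_0$) such that $D\perp\xi$. Let $G$ be the $g$-orthogonal complement of $D\oplus\langle\xi\rangle$ in $T\overline M|_M$, and let $f,w$ denote the orthogonal projections of $\varphi$ onto $D$ and onto $D^\perp$. Then $w(D_1),\dots,w(D_k)$ are mutually orthogonal subspaces of $G$ and $$G=\bigoplus_{i=1}^k w(D_i)\oplus H\quad(\text{orthogonal sum}),$$ where $H$ is the orthogonal complement of $\bigoplus_{i=1}^kw(D_i)$ in $G$, and $f(H)=\{0\}$. Moreover $\varphi(H)=w(H)=H$.
   Context: An almost $(\epsilon)$-contact metric manifold $(\overline M,\varphi,\xi,\eta,g)$, $\epsilon\in\{-1,1\}$, is a Riemannian manifold $(\overline M,g)$ with a unit vector field $\xi$, its dual 1-form $\eta(X)=g(X,\xi)$, and a $(1,1)$-tensor field $\varphi$ with $g(\varphi X,Y)=\epsilon g(X,\varphi Y)$ and $\varphi^2=\epsilon(I-\eta\otimes\xi)$. $M$ is either $\overline M$ or an immersed submanifold with $\xi$ tangent to $M$; $\langle\xi\rangle$ is the line bundle spanned by $\xi$. A distribution on $M$ is a smooth subbundle of constant rank of $T\overline M|_M$. For a distribution $D$ and $Z\in T_x\overline M$, $fZ$, $wZ$ are the $g$-orthogonal projections of $\varphi Z$ onto $D_x$ and onto its orthogonal complement $D_x^\perp$ in $T_x\overline M$; $f$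 is the component of $\varphi$ into $D$. The angle between a nonzero vector $u$ and a subspace $V$ is $\theta\in[0,\frac\pi2]$ with $\cos\theta=\|\mathrm{pr}_Vu\|/\|u\|$. A non-null distribution $D$ is slant with slant angle $\theta\in(0,\frac\pi2]$ if for all $x\in M$, $v\in D_x\setminus\{0\}$: $\varphi v\ne0$ and the angle between $\varphi v$ and $D_x$ is $\theta$. For $k\ge1$, $D$ is a $k$-slant distribution if there is a $g$-orthogonal decomposition $D=\bigoplus_{i=0}^kD_i$ into distributions with $D_i\ne\{0\}$ ($1\le i\le k$), $D_0$ possibly $\{0\}$, and pairwise distinct $\theta_1,\dots,\theta_k\in(0,\frac\pi2]$ with: (i) $D_i$ slant with angle $\theta_i$ ($1\le i\le k$); (ii) $\varphi(D_0)\subseteq D_0$; (iii) $f(D_i)\subseteq D_i$ ($1\le i\le k$). $D_0$ is the invariant component. *)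

From HB Require Import structures.
From mathcomp Require Import all_boot all_order all_algebra.
From mathcomp Require Import all_classical all_reals all_analysis.
Set Implicit Arguments. Unset Strict Implicit. Unset Printing Implicit Defensive.
Import Order.TTheory GRing.Theory Num.Theory.
Local Open Scope ring_scope.
Local Open Scope classical_set_scope.

(* Pointwise model: each fiber T_x(Mbar), x in M, is identified with 'rV[R]_n;
   the metric g_x is given by a Gram matrix Gm; subspaces are row spaces of
   matrices (mxalgebra); linear endomorphisms (phi_x) act by right
   multiplication u *m Phi. *)

Section Defs.
Variable R : realType.
Variable n : nat.

Definition ip (Gm : 'M[R]_n) (u v : 'rV[R]_n) : R := (u *m Gm *m v^T) 0 0.

Definition inner_product (Gm : 'M[R]_n) : Prop :=
  Gm^T = Gm /\ forall u : 'rV[R]_n, u != 0 -> 0 < ip Gm u u.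

Definition vnorm (Gm : 'M[R]_n) (u : 'rV[R]_n) : R := Num.sqrt (ip Gm u u).

Definition orth (Gm : 'M[R]_n) m1 m2 (V : 'M[R]_(m1, n)) (W : 'M[R]_(m2, n)) : Prop :=
  forall u v : 'rV[R]_n, (u <= V)%MS -> (v <= W)%MS -> ip Gm u v = 0.

Definition ocompl (Gm : 'M[R]_n) m (V : 'M[R]_(m, n)) : 'M[R]_n :=
  kermx (Gm *m V^T).

Definition is_proj (Gm : 'M[R]_n) m (V : 'M[R]_(m, n)) (u p : 'rV[R]_n) : Prop :=
  (p <= V)%MS /\ forall v : 'rV[R]_n, (v <= V)%MS -> ip Gm (u - p) v = 0.

Definition proj (Gm : 'M[R]_n) m (V : 'M[R]_(m, n)) (u : 'rV[R]_n) : 'rV[R]_n :=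
  xget 0 [set p | is_proj Gm V u p].

Definition vangle (Gm : 'M[R]_n) (u : 'rV[R]_n) m (V : 'M[R]_(m, n)) (theta : R) : Prop :=
  0 <= theta <= pi / 2 /\ cos theta = vnorm Gm (proj Gm V u) / vnorm Gm u.

Definition vset m (V : 'M[R]_(m, n)) : set 'rV[R]_n := [set u | (u <= V)%MS].

End Defs.

Section Bundle.
Variables (R : realType) (n : nat) (M : Type).

Definition tdistribution (D : M -> 'M[R]_n) : Prop :=
  exists r, forall x, \rank (D x) = r.

Definition almost_eps_contact_metric (eps : R) (Gm : M -> 'M[R]_n)
    (Phi : M -> 'M[R]_n) (xi : M -> 'rV[R]_n) : Prop :=
  (eps = 1 \/ eps = -1) /\
  forall x, [/\ inner_product (Gm x),
    ip (Gm x) (xi x) (xi x) = 1,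
    (forall u v, ip (Gm x) (u *m Phi x) v = eps * ip (Gm x) u (v *m Phi x)) &
    (forall u, u *m Phi x *m Phi x = eps *: (u - ip (Gm x) u (xi x) *: xi x))].

Definition fcomp (Gm Phi D : M -> 'M[R]_n) (x : M) (Z : 'rV[R]_n) : 'rV[R]_n :=
  proj (Gm x) (D x) (Z *m Phi x).

Definition wcomp (Gm Phi D : M -> 'M[R]_n) (x : M) (Z : 'rV[R]_n) : 'rV[R]_n :=
  proj (Gm x) (ocompl (Gm x) (D x)) (Z *m Phi x).

Definition slant (Gm Phi D : M -> 'M[R]_n) (theta : R) : Prop :=
  tdistribution D /\ (exists x, D x != 0) /\ 0 < theta <= pi / 2 /\
  forall x (v : 'rV[R]_n), (v <= D x)%MS -> v != 0 ->
    v *m Phi x != 0 /\ vangle (Gm x) (v *m Phi x) (D x) theta.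

(* D is a k-slant tdistribution with decomposition D = D0 (+) (+)_{i<k} Ds i
   (index i : 'I_k corresponds to D_{i+1}) and slant angles theta *)
Definition k_slant (k : nat) (Gm Phi D : M -> 'M[R]_n)
    (D0 : M -> 'M[R]_n) (Ds : 'I_k -> M -> 'M[R]_n) (theta : 'I_k -> R) : Prop :=
  (1 <= k)%N /\ tdistribution D /\ tdistribution D0 /\
  (forall i, tdistribution (Ds i)) /\
  (forall x, (D x == D0 x + \sum_(i < k) Ds i x)%MS) /\
  (forall x i, orth (Gm x) (D0 x) (Ds i x)) /\
  (forall x i j, i != j -> orth (Gm x) (Ds i x) (Ds j x)) /\
  (forall x i, Ds i x != 0) /\
  (forall i j, i != j -> theta i != theta j) /\
  (forall i, slant Gm Phi (Ds i) (theta i)) /\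
  (forall x, (D0 x *m Phi x <= D0 x)%MS) /\
  (forall x i (v : 'rV[R]_n), (v <= Ds i x)%MS -> (fcomp Gm Phi D x v <= Ds i x)%MS).

End Bundle.

From Pilot Require Import Defs.
From HB Require Import structures.
From mathcomp Require Import all_boot all_order all_algebra.
From mathcomp Require Import all_classical all_reals all_analysis.
Set Implicit Arguments. Unset Strict Implicit. Unset Printing Implicit Defensive.
Import Order.TTheory GRing.Theory Num.Theory.
Local Open Scope ring_scope.
Local Open Scope classical_set_scope.

(** Everything happens in a single fiber. Since [φ] is an [ε]-isometry on
    [ξ^⊥] and kills [ξ], for [a, b] in [D] the splitting [φa = fa + wa] gives
    [g(wa, wb) = g(a, b) - g(fa, fb)]; as [f] preserves each [D_i], the
    spaces [w(D_i)] are mutually orthogonal, and they lie in [G] because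
    [wa ⊥ D] and [φa ⊥ ξ]. Since [φ(D_0) ⊆ D_0], [w] vanishes on [D_0], so
    [w(D) = ⊕ w(D_i)]. For [h] in [H] and [d] in [D],
    [g(φh, d) = ±g(h, fd + wd) = 0], hence [fh = 0] and [wh = φh]; the same
    computation gives [φh ∈ H], and [φ² = ε] on [H] makes [φ] onto [H]. *)

Lemma sub_mulmxrP (R : fieldType) m p q n (A : 'M[R]_(m, p)) (B : 'M[R]_(p, n))
    (C : 'M[R]_(q, n)) :
  (A *m B <= C)%MS <-> forall u : 'rV[R]_p, (u <= A)%MS -> (u *m B <= C)%MS.
Proof.
split=> [sABC u /submxP [c ->] | sBC]; first by rewrite -mulmxA mulmx_sub.
by apply/row_subP => j; rewrite row_mul sBC ?row_sub.
Qed.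

Lemma submx_mulP (R : fieldType) m p n (A : 'M[R]_(m, p)) (B : 'M[R]_(p, n))
    (v : 'rV[R]_n) :
  (v <= A *m B)%MS <-> exists2 u, (u <= A)%MS & v = u *m B.
Proof.
split=> [/submxP [c ->] | [u /submxP [c ->] ->]]; last by rewrite -mulmxA submxMl.
by exists (c *m A); rewrite ?submxMl ?mulmxA.
Qed.

Lemma vset_mulmx (R : realType) n m (A : 'M[R]_(m, n)) (B : 'M[R]_n) :
  vset (A *m B) = [set u *m B | u in vset A].
Proof.
apply/seteqP; split=> v /=; first by move/submx_mulP => [u Au ->]; exists u.
by move=> [u Au <-]; apply/submx_mulP; exists u.
Qed.

Section InnerProduct.
Variables (R : realType) (n : nat) (G : 'M[R]_n).
Implicit Types u v w p q : 'rV[R]_n.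

Lemma ipDl u v w : ip G (u + v) w = ip G u w + ip G v w.
Proof. by rewrite /ip !mulmxDl mxE. Qed.

Lemma ipZl a u w : ip G (a *: u) w = a * ip G u w.
Proof. by rewrite /ip -!scalemxAl mxE. Qed.

Lemma ipBl u v w : ip G (u - v) w = ip G u w - ip G v w.
Proof. by rewrite -scaleN1r ipDl ipZl mulN1r. Qed.

Lemma ip0l w : ip G 0 w = 0.
Proof. by rewrite /ip !mul0mx mxE. Qed.

Lemma ocomplP m (V : 'M[R]_(m, n)) u :
  (u <= ocompl G V)%MS <-> forall v, (v <= V)%MS -> ip G u v = 0.
Proof.
rewrite /ocompl sub_kermx; split=> [/eqP uGV0 v /submxP [c ->] | uV].
  by rewrite /ip trmx_mul !mulmxA -(mulmxA u G) uGV0 mul0mx mxE.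
apply/eqP/rowP => j; rewrite [RHS]mxE -(uV (row j V) (row_sub j V)).
by rewrite /ip tr_row mulmxA !mxE; apply: eq_bigr => i _; rewrite !mxE.
Qed.

Hypothesis HG : inner_product G.

Lemma ipC u v : ip G u v = ip G v u.
Proof.
have trE (A : 'M[R]_1) : A 0 0 = A^T 0 0 by rewrite mxE.
by rewrite /ip [RHS]trE !trmx_mul trmxK HG.1 mulmxA.
Qed.

Lemma ipDr u v w : ip G w (u + v) = ip G w u + ip G w v.
Proof. by rewrite ipC ipDl ipC (ipC v). Qed.

Lemma ipZr a u w : ip G w (a *: u) = a * ip G w u.
Proof. by rewrite ipC ipZl ipC. Qed.

Lemma ipBr u v w : ip G w (u - v) = ip G w u - ip G w v.
Proof. by rewrite ipC ipBl ipC (ipC v). Qed.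

Lemma ip0r w : ip G w 0 = 0.
Proof. by rewrite ipC ip0l. Qed.

Lemma ip_self_eq0 u : ip G u u = 0 -> u = 0.
Proof.
move=> uu0; apply/eqP; apply: contraT => /(HG.2 u).
by rewrite uu0 ltxx.
Qed.

Lemma sub_ocompl_row u v : (u <= ocompl G v)%MS <-> ip G u v = 0.
Proof.
rewrite ocomplP; split=> [-> // | uv0 _ /submxP [c ->]].
by rewrite [c]mx11_scalar mul_scalar_mx ipZr uv0 mulr0.
Qed.

Lemma sub_ocompl_adds m1 m2 (A : 'M[R]_(m1, n)) (B : 'M[R]_(m2, n)) u :
  (u <= ocompl G (A + B)%MS)%MS <-> (u <= ocompl G A)%MS /\ (u <= ocompl G B)%MS.
Proof.
rewrite !ocomplP; split=> [uAB | [uA uB] v /sub_addsmxP [[c1 c2] ->] /=].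
  by split=> v vs; apply: uAB; rewrite (submx_trans vs) ?addsmxSl ?addsmxSr.
by rewrite ipDr uA ?uB ?submxMl ?addr0.
Qed.

Section Projection.
Variables (m : nat) (V : 'M[R]_(m, n)).

Lemma is_proj_uniq u p q : is_proj G V u p -> is_proj G V u q -> p = q.
Proof.
move=> [Vp up] [Vq uq]; apply/eqP; rewrite -subr_eq0; apply/eqP/ip_self_eq0.
have Vpq : (p - q <= V)%MS by apply: addmx_sub Vp _; rewrite eqmx_opp.
have E : p - q = (u - q) - (u - p) by rewrite opprB [RHS]addrC addrA subrK.
by rewrite {1}E ipBl uq // up // subrr.
Qed.

Lemma projE u p : is_proj G V u p -> Defs.proj G V u = p.
Proof. by move=> up; apply: xget_unique => // q uq; apply: is_proj_uniq uq up. Qed.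

(* Standard formula [B^T (B G B^T)^-1 B] for the projection, written for row
   vectors acting on the right, with [B] a basis of the row space of [V]. *)
Definition projmx : 'M[R]_n :=
  let B := row_base V in G *m B^T *m invmx (B *m G *m B^T) *m B.

Lemma is_proj_projmx u : is_proj G V u (u *m projmx).
Proof.
have subB w : (w <= V)%MS = (w <= row_base V)%MS by rewrite eq_row_base.
rewrite /projmx; move: (row_base V) (row_base_free V) subB => B freeB subB.
have Kunit : B *m G *m B^T \in unitmx.
  rewrite -row_free_unit; apply: inj_row_free => c cK0.
  suff /eqP : c *m B = 0 by rewrite mulmx_free_eq0 // => /eqP.
  apply: ip_self_eq0.
  by rewrite /ip trmx_mul mulmxA -(mulmxA c B G) -(mulmxA c) cK0 mul0mx mxE.
split=> [|v]; first by rewrite subB mulmxA submxMl.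
rewrite subB => /submxP [c ->].
suff uB0 : (u - u *m (G *m B^T *m invmx (B *m G *m B^T) *m B)) *m G *m B^T = 0.
  by rewrite /ip trmx_mul (mulmxA _ B^T) uB0 mul0mx mxE.
by rewrite !mulmxBl -!mulmxA (mulmxA B G) mulVmx ?mulmx1 ?subrr.
Qed.

Lemma proj_mxE u : Defs.proj G V u = u *m projmx.
Proof. exact/projE/is_proj_projmx. Qed.

Lemma proj_sub u : (Defs.proj G V u <= V)%MS.
Proof. by rewrite proj_mxE; case: (is_proj_projmx u). Qed.

Lemma ip_proj_orth u v : (v <= V)%MS -> ip G (u - Defs.proj G V u) v = 0.
Proof. by rewrite proj_mxE; case: (is_proj_projmx u) => _; apply. Qed.

Lemma proj_id u : (u <= V)%MS -> Defs.proj G V u = u.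
Proof. by move=> Vu; apply: projE; split=> // v _; rewrite subrr ip0l. Qed.

Lemma proj_eq0 u : (u <= ocompl G V)%MS -> Defs.proj G V u = 0.
Proof.
by move=> /ocomplP uV; apply: projE; split=> [|v /uV]; rewrite ?sub0mx ?subr0.
Qed.

End Projection.

Lemma proj_ocompl m (V : 'M[R]_(m, n)) u :
  Defs.proj G (ocompl G V) u = u - Defs.proj G V u.
Proof.
apply: projE; split; first by apply/ocomplP; apply: ip_proj_orth.
move=> v /ocomplP vV; rewrite opprB addrC subrK ipC.
exact/vV/proj_sub.
Qed.

Lemma ip_proj_split m (V : 'M[R]_(m, n)) u v :
  ip G u v = ip G (Defs.proj G V u) (Defs.proj G V v)
           + ip G (Defs.proj G (ocompl G V) u) (Defs.proj G (ocompl G V) v).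
Proof.
rewrite !proj_ocompl; set p := Defs.proj G V u; set q := Defs.proj G V v.
have upq : ip G u q = ip G p q.
  by apply/eqP; rewrite -subr_eq0 -ipBl ip_proj_orth ?proj_sub.
have pvq : ip G p v = ip G p q.
  by apply/eqP; rewrite -subr_eq0 -ipBr ipC ip_proj_orth ?proj_sub.
by rewrite ipBl !ipBr upq pvq subrr subr0 addrC subrK.
Qed.

Lemma eqmx_adds_ocompl m1 m2 (U : 'M[R]_(m1, n)) (S : 'M[R]_(m2, n)) :
  (S <= U)%MS -> (U == S + (U :&: ocompl G S))%MS.
Proof.
move=> SU; apply/andP; split; last by rewrite addsmx_sub SU capmxSl.
apply/row_subP => j; set y := row j U.
rewrite -[y](subrK (Defs.proj G S y)) addrC addmx_sub_adds ?proj_sub // sub_capmx.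
rewrite addmx_sub ?eqmx_opp ?row_sub ?(submx_trans (proj_sub _ _)) //=.
by apply/ocomplP => v; apply: ip_proj_orth.
Qed.

End InnerProduct.

Section AlmostContact.
Variables (R : realType) (n : nat) (eps : R) (G F : 'M[R]_n) (xi : 'rV[R]_n).
Hypotheses (HG : inner_product G) (Heps : eps = 1 \/ eps = -1)
  (Hxi : ip G xi xi = 1)
  (HF : forall u v, ip G (u *m F) v = eps * ip G u (v *m F))
  (HF2 : forall u, u *m F *m F = eps *: (u - ip G u xi *: xi)).
Implicit Types u v d h : 'rV[R]_n.

Lemma eps_sqr : eps * eps = 1.
Proof. by case: Heps => ->; rewrite ?mulrNN mulr1. Qed.

Lemma xi_phi : xi *m F = 0.
Proof.
apply: (ip_self_eq0 HG).
by rewrite HF HF2 Hxi scale1r subrr scaler0 (ip0r HG) mulr0.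
Qed.

Lemma ip_phi_xi u : ip G (u *m F) xi = 0.
Proof. by rewrite HF xi_phi (ip0r HG) mulr0. Qed.

Lemma ip_phi_phi u v : ip G v xi = 0 -> ip G (u *m F) (v *m F) = ip G u v.
Proof.
by move=> vxi; rewrite HF HF2 vxi scale0r subr0 (ipZr HG) mulrA eps_sqr mul1r.
Qed.

Lemma phi_phi_perp u : ip G u xi = 0 -> u *m F *m F = eps *: u.
Proof. by move=> uxi; rewrite HF2 uxi scale0r subr0. Qed.

Section SlantDecomposition.
Variables (k : nat) (D D0 : 'M[R]_n) (Ds : 'I_k -> 'M[R]_n).
Hypotheses (HD : (D == D0 + \sum_(i < k) Ds i)%MS)
  (HDs_orth : forall i j, i != j -> orth G (Ds i) (Ds j))
  (HD0_inv : (D0 *m F <= D0)%MS)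
  (Hf_inv : forall i v, (v <= Ds i)%MS -> (Defs.proj G D (v *m F) <= Ds i)%MS)
  (HD_xi : orth G D xi).

Local Notation fc u := (Defs.proj G D (u *m F)).
Local Notation wc u := (Defs.proj G (ocompl G D) (u *m F)).
Local Notation W i := (Ds i *m F *m projmx G (ocompl G D)).
Local Notation S := (\sum_(i < k) W i)%MS.
Local Notation Gc := (ocompl G (D + xi)%MS).
Local Notation H := (Gc :&: ocompl G S)%MS.

Lemma wc_mxE u : wc u = u *m (F *m projmx G (ocompl G D)).
Proof. by rewrite (proj_mxE HG) mulmxA. Qed.

Lemma vset_W i : vset (W i) = [set wc v | v in vset (Ds i)].
Proof.
rewrite -mulmxA vset_mulmx; apply/seteqP.
by split=> _ /= [v Dv <-]; exists v; rewrite // wc_mxE.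
Qed.

Lemma Ds_sub_D i : (Ds i <= D)%MS.
Proof. by rewrite (eqmxP HD) (submx_trans _ (addsmxSr _ _)) // (sumsmx_sup i). Qed.

Lemma ip_D_xi d : (d <= D)%MS -> ip G d xi = 0.
Proof. by move=> Dd; apply: HD_xi. Qed.

Lemma ip_wc d1 d2 : (d2 <= D)%MS ->
  ip G (wc d1) (wc d2) = ip G d1 d2 - ip G (fc d1) (fc d2).
Proof.
move=> Dd2; rewrite -(ip_phi_phi d1 (ip_D_xi Dd2)).
by rewrite [ip G (d1 *m F) _](ip_proj_split HG D) addrC addKr.
Qed.

Lemma W_orth i j : i != j -> orth G (W i) (W j).
Proof.
move=> ij u v; rewrite -!mulmxA => /submx_mulP [d1 D1 ->] /submx_mulP [d2 D2 ->].
rewrite -!wc_mxE ip_wc ?(submx_trans D2) ?Ds_sub_D //.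
by rewrite (HDs_orth ij D1 D2) (HDs_orth ij (Hf_inv D1) (Hf_inv D2)) subrr.
Qed.

Lemma wc_sub_Gc d : (d <= D)%MS -> (wc d <= Gc)%MS.
Proof.
move=> Dd; apply/(sub_ocompl_adds HG); split; first exact: proj_sub.
apply/(sub_ocompl_row HG).
by rewrite (proj_ocompl HG) ipBl ip_phi_xi ip_D_xi ?proj_sub ?subrr.
Qed.

Lemma W_sub_Gc i : (W i <= Gc)%MS.
Proof.
rewrite -mulmxA; apply/sub_mulmxrP => u Du.
by rewrite -wc_mxE wc_sub_Gc ?(submx_trans Du) ?Ds_sub_D.
Qed.

Lemma sumW_sub_Gc : (S <= Gc)%MS.
Proof. by apply/sumsmx_subP => i _; apply: W_sub_Gc. Qed.

Lemma sumW_sub_wD : (S <= D *m (F *m projmx G (ocompl G D)))%MS.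
Proof. by apply/sumsmx_subP => i _; rewrite -mulmxA submxMr ?Ds_sub_D. Qed.

Lemma wc_sub_sumW d : (d <= D)%MS -> (wc d <= S)%MS.
Proof.
rewrite (eqmxP HD) => /sub_addsmxP [[c0 c] ->] /=; rewrite wc_mxE mulmxDl.
have D0_sub_D : (D0 <= D)%MS by rewrite (eqmxP HD) addsmxSl.
rewrite -wc_mxE (proj_ocompl HG) (proj_id HG) ?subrr ?add0r; last first.
  by rewrite (submx_trans _ D0_sub_D) // -mulmxA mulmx_sub.
have /sub_sumsmxP [u ->] := submxMl c (\sum_(i < k) Ds i)%MS.
rewrite mulmx_suml summx_sub // => i _.
by rewrite (sumsmx_sup i) // -!mulmxA submxMl.
Qed.

Lemma H_sub_Gc h : (h <= H)%MS -> (h <= Gc)%MS.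
Proof. by rewrite sub_capmx => /andP []. Qed.

Lemma ip_H_D h d : (h <= H)%MS -> (d <= D)%MS -> ip G h d = 0.
Proof. by move=> /H_sub_Gc /(sub_ocompl_adds HG) [/ocomplP hD _]; apply: hD. Qed.

Lemma ip_H_xi h : (h <= H)%MS -> ip G h xi = 0.
Proof. by move=> /H_sub_Gc /(sub_ocompl_adds HG) [_ /(sub_ocompl_row HG)]. Qed.

Lemma ip_H_sumW h z : (h <= H)%MS -> (z <= S)%MS -> ip G h z = 0.
Proof. by rewrite sub_capmx => /andP [_ /ocomplP hS]; apply: hS. Qed.

Lemma phi_H_ocompl_D h : (h <= H)%MS -> (h *m F <= ocompl G D)%MS.
Proof.
move=> Hh; apply/ocomplP => d Dd; rewrite HF -[d *m F](subrK (fc d)).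
rewrite -(proj_ocompl HG) (ipDr HG) (ip_H_sumW Hh (wc_sub_sumW Dd)).
by rewrite (ip_H_D Hh (proj_sub HG _ _)) addr0 mulr0.
Qed.

Lemma phi_H_sub h : (h <= H)%MS -> (h *m F <= H)%MS.
Proof.
move=> Hh; rewrite sub_capmx; apply/andP; split.
  apply/(sub_ocompl_adds HG); split; first exact: phi_H_ocompl_D.
  exact/(sub_ocompl_row HG)/ip_phi_xi.
apply/ocomplP => z /submx_trans /(_ sumW_sub_wD) /submx_mulP [d Dd ->].
rewrite -wc_mxE (proj_ocompl HG) (ipBr HG) ip_phi_phi ?ip_D_xi // ip_H_D //.
by move/phi_H_ocompl_D/ocomplP: Hh => ->; rewrite ?subrr ?proj_sub.
Qed.

Lemma fc_H h : (h <= H)%MS -> fc h = 0.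
Proof. by move=> /phi_H_ocompl_D; apply: proj_eq0. Qed.

Lemma wc_H h : (h <= H)%MS -> wc h = h *m F.
Proof. by move=> Hh; rewrite (proj_ocompl HG) fc_H ?subr0. Qed.

Lemma phi_H_image : [set h *m F | h in vset H] = vset H.
Proof.
apply/seteqP; split=> [_ [h Hh <-] | h Hh]; first exact: phi_H_sub.
(* [φ² = ε] on [H ⊆ ξ^⊥], so [ε φh] is a preimage of [h]. *)
exists (eps *: (h *m F)); first by rewrite /vset /= scalemx_sub ?phi_H_sub.
by rewrite -scalemxAl phi_phi_perp ?ip_H_xi // scalerA eps_sqr scale1r.
Qed.

Lemma wc_H_image : [set wc h | h in vset H] = vset H.
Proof. by rewrite -[RHS]phi_H_image; apply: eq_imagel => h; apply: wc_H. Qed.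

Lemma Gc_eq_sumW_H : (Gc == S + H)%MS.
Proof. exact: eqmx_adds_ocompl sumW_sub_Gc. Qed.

End SlantDecomposition.
End AlmostContact.

Theorem mainTheorem5 (R : realType) (n : nat) (M : Type) (eps : R)
    (Gm Phi : M -> 'M[R]_n) (xi : M -> 'rV[R]_n)
    (TM : M -> 'M[R]_n) (k : nat)
    (D D0 : M -> 'M[R]_n) (Ds : 'I_k -> M -> 'M[R]_n) (theta : 'I_k -> R) :
  almost_eps_contact_metric eps Gm Phi xi ->
  (* M is Mbar or a submanifold with xi tangent to M *)
  tdistribution TM -> (forall x, (xi x <= TM x)%MS) ->
  (1 <= k)%N ->
  k_slant Gm Phi D D0 Ds theta ->
  (* D is orthogonal to xi *)
  (forall x, orth (Gm x) (D x) (xi x)) ->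
  forall x : M,
    let Gc := ocompl (Gm x) (D x + xi x)%MS in
    exists W : 'I_k -> 'M[R]_n,
      (forall i, vset (W i) = [set wcomp Gm Phi D x v | v in vset (Ds i x)]) /\
      (forall i, (W i <= Gc)%MS) /\
      (forall i j, i != j -> orth (Gm x) (W i) (W j)) /\
      let H := (Gc :&: ocompl (Gm x) (\sum_(i < k) W i)%MS)%MS in
      (Gc == \sum_(i < k) W i + H)%MS /\
      (forall h, (h <= H)%MS -> fcomp Gm Phi D x h = 0) /\
      [set h *m Phi x | h in vset H] = vset H /\
      [set wcomp Gm Phi D x h | h in vset H] = vset H.
Proof.
move=> [Heps contact] _ _ _ [_ [_ [_ [_ [HD [_ [HDs [_ [_ [_ [HD0 Hf]]]]]]]]]]].
move=> HDxi x Gc; have [HG Hxi HF HF2] := contact x.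
have {}HD := HD x; have {}HDs := HDs x; have {}HD0 := HD0 x.
have {}Hf := Hf x; have {}HDxi := HDxi x.
exists (fun i => Ds i x *m Phi x *m projmx (Gm x) (ocompl (Gm x) (D x))).
split; first exact: (vset_W _ HG).
split; first exact: (W_sub_Gc HG Hxi HF HF2 HD HDxi).
split; first exact: (W_orth HG Heps HF HF2 HD HDs Hf HDxi).
move=> H; split; first exact: (Gc_eq_sumW_H HG Hxi HF HF2 HD HDxi).
split; first exact: (fc_H HG HF HD HD0).
split; first exact: (phi_H_image HG Heps Hxi HF HF2 HD HD0 HDxi).
exact: (wc_H_image HG Heps Hxi HF HF2 HD HD0 HDxi).
Qed.
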